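(* Let $X$ be a well-filtered space such that its Smyth power space $P_S(X)$ is first-countable. Then the upper Vietoris topology and the Scott topology on $\mathsf{K}(X)$ coincide.
   Context: All spaces are $T_0$; the specialization order is $x\le y$ iff $x\in\overline{\{y\}}$, and saturated sets are the upper sets in this order. $\mathsf{K}(X)$ is the set of nonempty compact saturated subsets of $X$ ordered by reverse inclusion; a family in $\mathsf{K}(X)$ has a supremum iff its intersection lies in $\mathsf{K}(X)$, and then the supremum is the intersection. The Scott topology on a poset $Q$ consists of upper sets $U$ such that every directed $D$ whose supremum exists and lies in $U$ meets $U$. For open $U\subseteq X$, $\Box U=\{K\in\mathsf{K}(X):K\subseteq U\}$; the upper Vietoris topology on $\mathsf{K}(X)$ has base $\{\Box U: U\text{ open}\}$, and the resulting space is the Smyth power space $P_S(X)$. $X$ is well-filtered if for every open $U$ and every family $\mathcal K\subseteq\mathsf{K}(X)$ filtered under inclusion, $\bigcap\mathcal K\subseteq U$ implies $K\subseteq U$ for some $K\in\mathcal K$. *)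

From Stdlib Require Import List.
Set Implicit Arguments.

Record Space := {
  carrier :> Type;
  isOpen : (carrier -> Prop) -> Prop;
  open_ext : forall U V : carrier -> Prop,
      (forall x, U x <-> V x) -> isOpen U -> isOpen V;
  open_full : isOpen (fun _ => True);
  open_inter : forall U V, isOpen U -> isOpen V -> isOpen (fun x => U x /\ V x);
  open_union : forall F : (carrier -> Prop) -> Prop,
      (forall U, F U -> isOpen U) -> isOpen (fun x => exists U, F U /\ U x)
}.

Definition subset {T : Type} (A B : T -> Prop) : Prop := forall x, A x -> B x.

Section Defs.
Variable X : Space.

Definition T0 : Prop :=
  forall x y : X, (forall U, isOpen X U -> (U x <-> U y)) -> x = y.

Definition spec_le (x y : X) : Prop := forall U, isOpen X U -> U x -> U y.

Definition saturated (A : X -> Prop) : Prop :=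
  forall x y, A x -> spec_le x y -> A y.

Definition compact (A : X -> Prop) : Prop :=
  forall F : (X -> Prop) -> Prop,
    (forall U, F U -> isOpen X U) ->
    (forall x, A x -> exists U, F U /\ U x) ->
    exists l : list (X -> Prop),
      (forall U, In U l -> F U) /\ (forall x, A x -> exists U, In U l /\ U x).

Definition inK (K : X -> Prop) : Prop :=
  (exists x, K x) /\ compact K /\ saturated K.

Definition well_filtered : Prop :=
  forall (U : X -> Prop) (KK : (X -> Prop) -> Prop),
    isOpen X U ->
    (forall K, KK K -> inK K) ->
    (exists K, KK K) ->
    (forall K1 K2, KK K1 -> KK K2 ->
        exists K3, KK K3 /\ subset K3 K1 /\ subset K3 K2) ->
    subset (fun x => forall K, KK K -> K x) U ->
    exists K, KK K /\ subset K U.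

Definition KX : Type := { K : X -> Prop | inK K }.

Definition Kle (a b : KX) : Prop := subset (proj1_sig b) (proj1_sig a).

Definition directed (D : KX -> Prop) : Prop :=
  (exists d, D d) /\
  (forall a b, D a -> D b -> exists c, D c /\ Kle a c /\ Kle b c).

Definition is_sup (D : KX -> Prop) (s : KX) : Prop :=
  (forall d, D d -> Kle d s) /\
  (forall u, (forall d, D d -> Kle d u) -> Kle s u).

Definition scott_open (W : KX -> Prop) : Prop :=
  (forall a b, W a -> Kle a b -> W b) /\
  (forall D s, directed D -> is_sup D s -> W s -> exists d, D d /\ W d).

Definition Box (U : X -> Prop) : KX -> Prop := fun K => subset (proj1_sig K) U.

Definition uv_open (W : KX -> Prop) : Prop :=
  forall K, W K -> exists U, isOpen X U /\ Box U K /\ subset (Box U) W.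

Definition PS_first_countable : Prop :=
  forall K : KX, exists B : nat -> (KX -> Prop),
    (forall n, exists V, uv_open V /\ V K /\ subset V (B n)) /\
    (forall W, uv_open W -> W K -> exists n, subset (B n) W).

End Defs.

(** Upper Vietoris opens [Box U] are Scott open because, in a well-filtered
    space, the supremum of a directed family in K(X) is its intersection, and
    an intersection inside an open [U] forces one member inside [U].

    Conversely, let [W] be Scott open and [K] in [W]. First-countability of
    P_S(X), tested on principal upsets, yields a decreasing sequence of open
    sets [Q n] containing [K] that is a neighbourhood base of [K] in X. If no
    [Box (Q n)] lay inside [W], pick [K n] in [Box (Q n)] outside [W]. The
    sets [K ∪ ⋃_{j>=n} K j] are compact saturated (the [K j] converge to [K]),
    form a chain whose intersection, hence supremum, is [K]; so one of them
    lies in [W], and then so does [K n] above it: a contradiction. *)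

From Stdlib Require Import List PeanoNat Lia Classical ClassicalEpsilon.

Section Topology.
Variable X : Space.

Lemma open_empty : isOpen X (fun _ => False).
Proof.
  apply (open_ext X (fun x => exists U, False /\ U x)); [| now apply open_union].
  intros x; split; [intros [_ [[] _]] | intros []].
Qed.

Definition list_union (l : list (X -> Prop)) : X -> Prop :=
  fun x => exists U, In U l /\ U x.

Lemma open_list_union (l : list (X -> Prop)) :
  (forall U, In U l -> isOpen X U) -> isOpen X (list_union l).
Proof. exact (open_union X (fun U => In U l)). Qed.

Lemma open_finite_inter (U : nat -> X -> Prop) (n : nat) :
  (forall m, isOpen X (U m)) -> isOpen X (fun x => forall m, m <= n -> U m x).
Proof.
  intros HU; induction n as [| n IHn].
  - apply (open_ext X (U 0)); [| exact (HU 0)].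
    intros x; split; [intros Ux m Hm; replace m with 0 by lia; exact Ux | intros H; apply H; lia].
  - apply (open_ext X (fun x => (forall m, m <= n -> U m x) /\ U (S n) x));
      [| exact (open_inter X _ _ IHn (HU (S n)))].
    intros x; split.
    + intros [H Ux] m Hm; destruct (Nat.eq_dec m (S n)) as [-> | Hne]; [exact Ux | apply H; lia].
    + intros H; split; [intros m Hm; apply H; lia | apply H; lia].
Qed.

Lemma list_union_app_l (l1 l2 : list (X -> Prop)) :
  subset (list_union l1) (list_union (l1 ++ l2)).
Proof. intros x [U [HU Ux]]; exists U; split; [apply in_or_app; left|]; assumption. Qed.

Lemma list_union_app_r (l1 l2 : list (X -> Prop)) :
  subset (list_union l2) (list_union (l1 ++ l2)).
Proof. intros x [U [HU Ux]]; exists U; split; [apply in_or_app; right|]; assumption. Qed.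

Lemma in_app_family (F : (X -> Prop) -> Prop) (l1 l2 : list (X -> Prop)) :
  (forall U, In U l1 -> F U) -> (forall U, In U l2 -> F U) ->
  forall U, In U (l1 ++ l2) -> F U.
Proof. intros H1 H2 U HU; apply in_app_or in HU as [HU | HU]; auto. Qed.

Lemma compact_ext (A B : X -> Prop) :
  (forall x, A x <-> B x) -> compact X A -> compact X B.
Proof.
  intros HAB HA F HF Hcov.
  destruct (HA F HF (fun x Ax => Hcov x (proj1 (HAB x) Ax))) as [l [Hl Hlc]].
  exists l; split; [exact Hl | intros x Bx; apply Hlc, HAB, Bx].
Qed.

Lemma compact_empty : compact X (fun _ => False).
Proof. intros F _ _; exists nil; split; intros; contradiction. Qed.

Lemma compact_union (A B : X -> Prop) :
  compact X A -> compact X B -> compact X (fun x => A x \/ B x).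
Proof.
  intros HA HB F HF Hcov.
  destruct (HA F HF (fun x Ax => Hcov x (or_introl Ax))) as [l1 [Hl1 Hc1]].
  destruct (HB F HF (fun x Bx => Hcov x (or_intror Bx))) as [l2 [Hl2 Hc2]].
  exists (l1 ++ l2); split; [exact (in_app_family F l1 l2 Hl1 Hl2)|].
  intros x [Ax | Bx].
  - exact (list_union_app_l l1 l2 x (Hc1 x Ax)).
  - exact (list_union_app_r l1 l2 x (Hc2 x Bx)).
Qed.

Lemma compact_finite_union (L : nat -> X -> Prop) (N : nat) :
  (forall j, compact X (L j)) -> compact X (fun x => exists j, j < N /\ L j x).
Proof.
  intros HL; induction N as [| N IHN].
  - apply (compact_ext (fun _ => False)); [intros x; split; [contradiction|] | exact compact_empty].
    intros [j [Hj _]]; lia.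
  - apply (compact_ext (fun x => (exists j, j < N /\ L j x) \/ L N x)).
    + intros x; split.
      * intros [[j [Hj Lx]] | Lx]; [exists j | exists N]; split; auto; lia.
      * intros [j [Hj Lx]]; destruct (Nat.eq_dec j N) as [-> | Hne]; [now right|].
        left; exists j; split; [lia | exact Lx].
    + exact (compact_union _ _ IHN (HL N)).
Qed.

Definition converges_to (L : nat -> X -> Prop) (K : X -> Prop) : Prop :=
  forall V, isOpen X V -> subset K V -> exists m, forall j, m <= j -> subset (L j) V.

Definition tail_union (K : X -> Prop) (L : nat -> X -> Prop) (n : nat) : X -> Prop :=
  fun x => K x \/ exists j, n <= j /\ L j x.

Lemma tail_union_antitone (K : X -> Prop) (L : nat -> X -> Prop) (p q : nat) :
  p <= q -> subset (tail_union K L q) (tail_union K L p).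
Proof. intros Hpq x [Kx | [j [Hj Lx]]]; [now left | right; exists j; split; [lia | exact Lx]]. Qed.

(* A finite subcover of [K] already covers almost all the [L j]. *)
Lemma compact_tail_union (K : X -> Prop) (L : nat -> X -> Prop) (n : nat) :
  compact X K -> (forall j, compact X (L j)) -> converges_to L K ->
  compact X (tail_union K L n).
Proof.
  intros HK HL Hconv F HF Hcov.
  destruct (HK F HF (fun x Kx => Hcov x (or_introl Kx))) as [l1 [Hl1 Hc1]].
  destruct (Hconv (list_union l1)) as [m Hm].
  { apply open_list_union; intros U HU; exact (HF U (Hl1 U HU)). }
  { exact Hc1. }
  destruct (compact_finite_union (fun j => L (n + j)) m (fun j => HL (n + j)) F HF)
    as [l2 [Hl2 Hc2]].
  { intros x [j [_ Lx]]; apply Hcov; right; exists (n + j); split; [lia | exact Lx]. }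
  exists (l1 ++ l2); split; [exact (in_app_family F l1 l2 Hl1 Hl2)|].
  intros x [Kx | [j [Hj Lx]]].
  - exact (list_union_app_l l1 l2 x (Hc1 x Kx)).
  - destruct (Nat.lt_ge_cases j m) as [Hjm | Hjm].
    + apply list_union_app_r, Hc2; exists (j - n); split; [lia|].
      replace (n + (j - n)) with j by lia; exact Lx.
    + exact (list_union_app_l l1 l2 x (Hm j Hjm x Lx)).
Qed.

Lemma compact_saturated_separation (K : X -> Prop) (x : X) :
  compact X K -> saturated X K -> ~ K x ->
  exists V, isOpen X V /\ subset K V /\ ~ V x.
Proof.
  intros Hc Hs Kx.
  destruct (Hc (fun V => isOpen X V /\ ~ V x)) as [l [Hl Hlc]].
  - intros U [HU _]; exact HU.
  - intros k Kk; apply NNPP; intros Hnone; apply Kx, (Hs k x Kk).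
    intros U HU Uk; apply NNPP; intros Ux; apply Hnone; exists U; auto.
  - exists (list_union l); split; [|split; [exact Hlc|]].
    + apply open_list_union; intros U HU; exact (proj1 (Hl U HU)).
    + intros [U [HU Ux]]; exact (proj2 (Hl U HU) Ux).
Qed.

Lemma tail_unions_inter (K : X -> Prop) (L : nat -> X -> Prop) :
  compact X K -> saturated X K -> converges_to L K ->
  subset (fun x => forall n, tail_union K L n x) K.
Proof.
  intros HKc HKs Hconv x Hx; apply NNPP; intros Kx.
  destruct (compact_saturated_separation K x HKc HKs Kx) as [V [HV [KV Vx]]].
  destruct (Hconv V HV KV) as [m Hm].
  destruct (Hx m) as [Kx' | [j [Hj Lx]]]; [exact (Kx Kx') | exact (Vx (Hm j Hj x Lx))].
Qed.

Lemma upset_inK (x : X) : inK X (spec_le X x).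
Proof.
  split; [|split].
  - exists x; intros U _ Ux; exact Ux.
  - intros F HF Hcov; destruct (Hcov x (fun U _ Ux => Ux)) as [U [FU Ux]].
    exists (U :: nil); split; [intros V [<- | []]; exact FU|].
    intros y Hxy; exists U; split; [now left | exact (Hxy U (HF U FU) Ux)].
  - intros y z Hxy Hyz U HU Ux; exact (Hyz U HU (Hxy U HU Ux)).
Qed.

Lemma subset_of_Box_subset (U V : X -> Prop) :
  isOpen X U -> subset (Box U) (Box V) -> subset U V.
Proof.
  intros HU HUV x Ux.
  apply (HUV (exist _ _ (upset_inK x)) (fun y Hxy => Hxy U HU Ux)).
  intros W HW Wx; exact Wx.
Qed.

Lemma tail_union_inK (K : X -> Prop) (L : nat -> X -> Prop) (n : nat) :
  inK X K -> (forall j, inK X (L j)) -> converges_to L K -> inK X (tail_union K L n).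
Proof.
  intros [[x Kx] [HKc HKs]] HL Hconv; split; [|split].
  - exists x; now left.
  - exact (compact_tail_union K L n HKc (fun j => proj1 (proj2 (HL j))) Hconv).
  - intros y z [Ky | [j [Hj Ly]]] Hyz; [left; exact (HKs y z Ky Hyz)|].
    right; exists j; split; [exact Hj | exact (proj2 (proj2 (HL j)) y z Ly Hyz)].
Qed.

End Topology.

Section SmythPowerSpace.
Variable X : Space.

Definition Kfamily (D : KX X -> Prop) : (X -> Prop) -> Prop :=
  fun K => exists d, D d /\ proj1_sig d = K.

Lemma Box_uv_open (U : X -> Prop) : isOpen X U -> uv_open (Box U).
Proof. intros HU K HK; exists U; split; [exact HU | split; [exact HK | intros L HL; exact HL]]. Qed.

Lemma is_sup_of_inter (D : KX X -> Prop) (s : KX X) :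
  (forall d, D d -> subset (proj1_sig s) (proj1_sig d)) ->
  subset (fun x => forall d, D d -> proj1_sig d x) (proj1_sig s) ->
  is_sup D s.
Proof.
  intros Hlow Hinter; split; [exact Hlow|].
  intros u Hu x ux; apply Hinter; intros d Hd; exact (Hu d Hd x ux).
Qed.

Lemma well_filtered_inter_inK (KK : (X -> Prop) -> Prop) :
  well_filtered X ->
  (forall K, KK K -> inK X K) -> (exists K, KK K) ->
  (forall K1 K2, KK K1 -> KK K2 -> exists K3, KK K3 /\ subset K3 K1 /\ subset K3 K2) ->
  inK X (fun x => forall K, KK K -> K x).
Proof.
  intros Hwf HKK Hne Hfil; split; [|split].
  - apply NNPP; intros Hempty.
    destruct (Hwf (fun _ => False) KK (open_empty X) HKK Hne Hfil) as [K [HK HKe]].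
    + intros x Hx; apply Hempty; exists x; exact Hx.
    + destruct (HKK K HK) as [[x Kx] _]; exact (HKe x Kx).
  - intros F HF Hcov.
    destruct (Hwf _ KK (open_union X F HF) HKK Hne Hfil Hcov) as [K [HK HKF]].
    destruct (proj1 (proj2 (HKK K HK)) F HF HKF) as [l [Hl Hlc]].
    exists l; split; [exact Hl | intros x Hx; exact (Hlc x (Hx K HK))].
  - intros x y Hx Hxy K HK; exact (proj2 (proj2 (HKK K HK)) x y (Hx K HK) Hxy).
Qed.

Lemma Box_scott_open (U : X -> Prop) :
  well_filtered X -> isOpen X U -> scott_open (Box U).
Proof.
  intros Hwf HU; split.
  - intros a b Ha Hab x bx; exact (Ha x (Hab x bx)).
  - intros D s [[d0 Hd0] Hdir] [_ Hlub] Hs.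
    assert (HKK : forall K, Kfamily D K -> inK X K) by (intros K [d [_ <-]]; exact (proj2_sig d)).
    assert (Hne : exists K, Kfamily D K) by (exists (proj1_sig d0), d0; auto).
    assert (Hfil : forall K1 K2, Kfamily D K1 -> Kfamily D K2 ->
               exists K3, Kfamily D K3 /\ subset K3 K1 /\ subset K3 K2).
    { intros K1 K2 [a [Ha <-]] [b [Hb <-]].
      destruct (Hdir a b Ha Hb) as [c [Hc [Hac Hbc]]].
      exists (proj1_sig c); split; [exists c; auto | split; assumption]. }
    pose (inter := exist _ _ (well_filtered_inter_inK _ Hwf HKK Hne Hfil) : KX X).
    assert (Hinter_s : Kle s inter).
    { apply Hlub; intros d Hd x Hx; apply Hx; exists d; auto. }
    destruct (Hwf U (Kfamily D) HU HKK Hne Hfil (fun x Hx => Hs x (Hinter_s x Hx)))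
      as [K [[d [Hd <-]] HdU]].
    exists d; split; assumption.
Qed.

Lemma uv_open_scott_open (W : KX X -> Prop) :
  well_filtered X -> uv_open W -> scott_open W.
Proof.
  intros Hwf HW; split.
  - intros a b Wa Hab; destruct (HW a Wa) as [U [HU [aU HUW]]].
    apply HUW, (proj1 (Box_scott_open U Hwf HU) a b aU Hab).
  - intros D s HD Hsup Ws; destruct (HW s Ws) as [U [HU [sU HUW]]].
    destruct (proj2 (Box_scott_open U Hwf HU) D s HD Hsup sU) as [d [Hd dU]].
    exists d; split; [exact Hd | exact (HUW d dU)].
Qed.

Lemma decreasing_open_base (K : KX X) :
  PS_first_countable X ->
  exists Q : nat -> X -> Prop,
    (forall n, isOpen X (Q n)) /\ (forall n, subset (proj1_sig K) (Q n)) /\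
    (forall p q, p <= q -> subset (Q q) (Q p)) /\
    (forall V, isOpen X V -> subset (proj1_sig K) V -> exists m, subset (Q m) V).
Proof.
  intros Hfc; destruct (Hfc K) as [B [HBnbhd HBbase]].
  assert (HU : forall n, exists U, isOpen X U /\ Box U K /\ subset (Box U) (B n)).
  { intros n; destruct (HBnbhd n) as [V [HV [VK HVB]]].
    destruct (HV K VK) as [U [HU [UK HUV]]].
    exists U; repeat split; auto; intros L UL; exact (HVB L (HUV L UL)). }
  pose (U n := proj1_sig (constructive_indefinite_description _ (HU n))).
  assert (HUspec : forall n, isOpen X (U n) /\ Box (U n) K /\ subset (Box (U n)) (B n))
    by (intros n; exact (proj2_sig (constructive_indefinite_description _ (HU n)))).
  exists (fun n x => forall m, m <= n -> U m x); repeat split.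
  - intros n; apply open_finite_inter; intros m; exact (proj1 (HUspec m)).
  - intros n x Kx m _; exact (proj1 (proj2 (HUspec m)) x Kx).
  - intros p q Hpq x Hx m Hm; apply Hx; lia.
  - intros V HV KV; destruct (HBbase (Box V) (Box_uv_open V HV) KV) as [m Hm].
    exists m; intros x Hx.
    apply (subset_of_Box_subset X (U m) V (proj1 (HUspec m))); [|apply Hx; lia].
    intros L HL; exact (Hm L (proj2 (proj2 (HUspec m)) L HL)).
Qed.

Lemma scott_open_uv_open (W : KX X -> Prop) :
  PS_first_countable X -> scott_open W -> uv_open W.
Proof.
  intros Hfc [Hup Hscott] K WK.
  destruct (decreasing_open_base K Hfc) as [Q [HQopen [HKQ [HQanti HQbase]]]].
  apply NNPP; intros Hnot_uv.
  assert (Hescape : forall n, exists L, Box (Q n) L /\ ~ W L).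
  { intros n; apply NNPP; intros Hnone; apply Hnot_uv.
    exists (Q n); split; [exact (HQopen n) | split; [exact (HKQ n) |]].
    intros L HL; apply NNPP; intros WL; apply Hnone; exists L; auto. }
  pose (Ln n := proj1_sig (constructive_indefinite_description _ (Hescape n))).
  assert (HLn : forall n, Box (Q n) (Ln n) /\ ~ W (Ln n))
    by (intros n; exact (proj2_sig (constructive_indefinite_description _ (Hescape n)))).
  pose (L j := proj1_sig (Ln j)).
  assert (Hconv : converges_to X L (proj1_sig K)).
  { intros V HV KV; destruct (HQbase V HV KV) as [m Hm].
    exists m; intros j Hj x Lx; exact (Hm x (HQanti m j Hj x (proj1 (HLn j) x Lx))). }
  pose (T n := exist _ _
          (tail_union_inK X _ L n (proj2_sig K) (fun j => proj2_sig (Ln j)) Hconv) : KX X).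
  assert (Hchain : directed (fun d => exists n, d = T n)).
  { split; [exists (T 0), 0; reflexivity|].
    intros a b [p ->] [q ->]; exists (T (p + q)); split; [exists (p + q); reflexivity|].
    split; apply tail_union_antitone; lia. }
  assert (Hsup : is_sup (fun d => exists n, d = T n) K).
  { pose proof (proj2_sig K) as [_ [HKc HKs]].
    apply is_sup_of_inter; [intros d [n ->] x Kx; now left|].
    intros x Hx; apply (tail_unions_inter X _ L HKc HKs Hconv); intros n.
    exact (Hx (T n) (ex_intro _ n eq_refl)). }
  destruct (Hscott _ K Hchain Hsup WK) as [d [[n ->] WTn]].
  apply (proj2 (HLn n)), (Hup (T n)); [exact WTn|].
  intros x Lx; right; exists n; split; [lia | exact Lx].
Qed.

End SmythPowerSpace.

Theorem mainTheorem2 (X : Space) :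
  T0 X -> well_filtered X -> PS_first_countable X ->
  forall W : KX X -> Prop, uv_open W <-> scott_open W.
Proof.
  intros _ Hwf Hfc W; split.
  - exact (uv_open_scott_open X W Hwf).
  - exact (scott_open_uv_open X W Hfc).
Qed.
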